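(* Let $c\ge\lceil(2n-1)/3\rceil$ and let $\mathbf{s}_n\in\mathcal{B}(n,c,d)$ with $d=n-c$. Then $\mathbf{s}_n\in\mathcal{R}(n,c)$ if and only if $\mathbf{s}_{[d:n]}=(s_d,\dots,s_{n-1})$ cannot be expressed as $(s_0,s_1,\dots,s_{b-1})^l$ for any aperiodic sequence $(s_0,\dots,s_{b-1})$, where $b>1$ is a proper divisor of $c$.
   Context: All sequences are binary (entries in $\mathbb{Z}_2$), $\overline{x}=x\oplus1$, $x\bmod d$ is the least nonnegative residue, and $\mathbf{a}^q$ is the concatenation of $q$ copies of $\mathbf a$. For $\mathbf{s}_n=(s_0,\dots,s_{n-1})$, $\mathbf{s}_j=(s_0,\dots,s_{j-1})$ and $\mathbf{s}_{[i:j]}=(s_i,\dots,s_{j-1})$. A length-$m$ sequence is periodic if it is the concatenation of $m/e$ copies of a length-$e$ sequence for a proper divisor $e$ of $m$, aperiodic otherwise. Right circular shift: $R^k(\mathbf{s}_n)=(s_{n-k},\dots,s_{n-1},s_0,\dots,s_{n-k-1})$, $0\le k<n$. For $c\ge\lfloor n/2\rfloor$ and $1\le d\le\min\{n-c,\lfloor n/2\rfloor\}$, $\mathcal{B}(n,c,d)$ is the set of aperiodic length-$n$ sequences $\mathbf{s}_n$ with $\mathbf{s}_d$ aperiodic and $\mathbf{s}_{c+d}=(s_0,\dots,s_{d-1})^q(s_0,\dots,s_{r-1},\overline{s_r})$, where $q=\lfloor(c+d-1)/d\rfloor$, $r=c+d-1-qd$, and $s_{c+d},\dots,s_{n-1}$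 are arbitrary. $\mathcal{B}(n,c)=\bigcup_{d=1}^{\min\{n-c,\lfloor n/2\rfloor\}}\mathcal{B}(n,c,d)$. For $\mathbf{s}_n\in\mathcal{B}(n,c,d)$, $add(\mathbf{s}_n)$ is the integer $t\ge0$ such that $s_{n-1-i}=s_{(d-1-i)\bmod d}$ for $0\le i<t$ and $s_{n-1-t}\neq s_{(d-1-t)\bmod d}$. For $\mathbf{s}_n\in\mathcal{B}(n,c)$, $E(\mathbf{s}_n)=\{R^k(\mathbf{s}_n):0\le k<n\}\cap\mathcal{B}(n,c)$, and $\mathcal{R}(n,c)$ is the set of all $\mathbf{s}\in\mathcal{B}(n,c)$ with $add(\mathbf{s})\ge add(\mathbf a)$ for every $\mathbf a\in E(\mathbf s)$ (the sequence representatives). *)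

From mathcomp Require Import all_boot.
Set Implicit Arguments. Unset Strict Implicit. Unset Printing Implicit Defensive.

(* Binary sequences are represented as [seq bool]; index i is [nth false s i]. *)

Definition rep (a : seq bool) (q : nat) : seq bool := flatten (nseq q a).

Definition periodic (s : seq bool) : Prop :=
  exists e, [/\ 0 < e, e < size s, e %| size s & s = rep (take e s) (size s %/ e)].

Definition aperiodic (s : seq bool) : Prop := ~ periodic s.

Definition subseqij (s : seq bool) (i j : nat) : seq bool := take (j - i) (drop i s).

(* Membership in B(n,c,d); includes the standing range conditions
   c >= floor(n/2) and 1 <= d <= min(n-c, floor(n/2)). *)
Definition inB (n c d : nat) (s : seq bool) : Prop :=
  let q := (c + d - 1) %/ d in
  let r := (c + d - 1) - q * d in
  [/\ size s = n, n./2 <= c, 1 <= d, d <= n - c & d <= n./2] /\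
  [/\ aperiodic s, aperiodic (take d s) &
      take (c + d) s = rep (take d s) q ++ (take r s ++ [:: ~~ nth false s r])].

Definition inBc (n c : nat) (s : seq bool) : Prop := exists d, inB n c d s.

(* add(s) for s in B(n,c,d): the least t >= 0 with
   s_{n-1-t} != s_{(d-1-t) mod d}; the least nonnegative residue of d-1-t
   modulo d is d-1-(t mod d).  (If no such t < n exists, the value is n.) *)
Definition add (d : nat) (s : seq bool) : nat :=
  let n := size s in
  find (fun t => nth false s (n - 1 - t) != nth false s (d - 1 - t %% d)) (iota 0 n).

Definition Rshift (k : nat) (s : seq bool) : seq bool := rotr k s.

Definition inE (n c : nat) (s a : seq bool) : Prop :=
  (exists2 k, k < n & a = Rshift k s) /\ inBc n c a.

Definition inR (n c : nat) (s : seq bool) : Prop :=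
  exists d, inB n c d s /\
    forall a d', inE n c s a -> inB n c d' a -> add d' a <= add d s.

Definition ceil_div (a b : nat) : nat := (a + b - 1) %/ b.

From mathcomp Require Import all_boot zify.
Set Implicit Arguments. Unset Strict Implicit. Unset Printing Implicit Defensive.

(* With d = n - c the whole of s is fixed by its first d symbols: s is
   d-periodic except for its last symbol s_(n-1), which breaks the period.  The
   hypothesis on c gives 2d <= c + 1, which is what makes the Fine-Wilf theorem
   (periods p and q on a window of length N with p + q <= N + gcd p q give the
   period gcd p q) applicable, and both sides of the equivalence turn out to
   hold for every such s.
   - If the tail s_[d:n] were (s_0 ... s_(b-1))^l, then s would have the
     periods b and d, hence gcd b d, up to position c - 1, which forces
     s_(n-1) = s_(n-1-d).
   - If a rotation a = R^k(s) lies in B(n,c,d'), then a breaks its period d'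
     at position c + d' - 1, while the defect of s sits at position k - 1 of
     a.  Wherever k - 1 lies relative to that window, Fine-Wilf or a direct
     chase of values rules this out unless k = 0 and d' = d.  Hence s is the only element of E(s)
     and is a representative; for n = 2 all add values are 0 anyway. *)

Definition has_period (T : Type) (f : nat -> T) (p N : nat) :=
  forall i, i + p < N -> f i = f (i + p).

Definition period_breaks_at (T : eqType) (f : nat -> T) (p N : nat) :=
  has_period f p N /\ f N != f (N - p).

Section Periods.

Variables (T : Type) (f : nat -> T).

Lemma has_period_le p N M : M <= N -> has_period f p N -> has_period f p M.
Proof. by move=> le_MN fp i lt_i; apply: fp; lia. Qed.

Lemma has_period_shift m p N :
  has_period f p (m + N) -> has_period (fun i => f (m + i)) p N.
Proof. by move=> fp i lt_i; rewrite addnA fp //; lia. Qed.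

Lemma has_period_modE p N i : 0 < p -> has_period f p N -> i < N -> f i = f (i %% p).
Proof.
move=> p_gt0 fp; elim/ltn_ind: i => i IH lt_iN.
have [lt_ip | le_pi] := ltnP i p; first by rewrite modn_small.
have -> : i = (i - p) + p by lia.
rewrite -fp ?modnDr; last by lia.
by apply: IH; lia.
Qed.

Lemma has_period_eqmod p N i j : 0 < p -> has_period f p N ->
  i < N -> j < N -> i = j %[mod p] -> f i = f j.
Proof.
move=> p_gt0 fp lt_i lt_j eq_ij.
by rewrite (has_period_modE p_gt0 fp lt_i) (has_period_modE p_gt0 fp lt_j) eq_ij.
Qed.

Lemma has_period_of_modE p N : 0 < p ->
  (forall i, i < N -> f i = f (i %% p)) -> has_period f p N.
Proof. by move=> p_gt0 fE i lt_i; rewrite fE ?(fE (i + p)) ?modnDr //; lia. Qed.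

End Periods.

Lemma has_period_ext (T : Type) (f g : nat -> T) p N :
  (forall i, i < N -> f i = g i) -> has_period f p N -> has_period g p N.
Proof. by move=> eq_fg fp i lt_i; rewrite -!eq_fg; [apply: fp | lia | lia]. Qed.

Lemma eqmod_gcd_shift p q x y : x + p = y + q -> x = y %[mod gcdn p q].
Proof.
move=> eq_xy.
have -> : x = x + p %[mod gcdn p q] by rewrite -modnDmr (eqP (dvdn_gcdl p q)) addn0.
by rewrite eq_xy -modnDmr (eqP (dvdn_gcdr p q)) addn0.
Qed.

Lemma eqmod_pred g x y : 0 < x -> 0 < y -> g %| x -> g %| y -> x - 1 = y - 1 %[mod g].
Proof.
move=> x_gt0 y_gt0 g_x g_y; apply/eqP; rewrite -(eqn_modDr 1) !subnK //.
by rewrite (eqP g_x) (eqP g_y).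
Qed.

(* By the subtractive Euclidean algorithm on the two periods. *)
Theorem fine_wilf (T : Type) (f : nat -> T) p q N : 0 < p -> 0 < q -> p + q <= N + gcdn p q ->
  has_period f p N -> has_period f q N -> has_period f (gcdn p q) N.
Proof.
have [m] := ubnP (p + q); elim: m => // m IH in p q N *.
move=> lt_pq_m p_gt0 q_gt0 bound fp fq.
wlog le_pq : p q p_gt0 q_gt0 lt_pq_m bound fp fq / p <= q.
  move=> sym; have [|lt_qp] := leqP p q; first exact: sym.
  by rewrite gcdnC; apply: sym; rewrite 1?gcdnC //; lia.
have [lt_pq | gt_pq | <-] := ltngtP p q; [| lia | by rewrite gcdnn].
have gcd_sub : gcdn p (q - p) = gcdn p q by rewrite -{2}(subnK (ltnW lt_pq)) gcdnDr.
set g := gcdn p q in bound gcd_sub *.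
have g_gt0 : 0 < g by rewrite gcdn_gt0 p_gt0.
have g_le : g <= q - p by rewrite -gcd_sub dvdn_leq ?dvdn_gcdr ?subn_gt0.
have fqp : has_period f (q - p) (N - p).
  move=> i lt_i; rewrite fq; last by lia.
  rewrite (fp (i + (q - p))); last by lia.
  by congr f; lia.
have fg : has_period f g (N - p).
  rewrite -gcd_sub; apply: IH; rewrite ?gcd_sub ?subn_gt0 //; try lia.
  exact: has_period_le (leq_subr p N) fp.
move=> i lt_igN; have lt_iN : i < N by lia.
rewrite (has_period_modE p_gt0 fp lt_iN) (has_period_modE p_gt0 fp lt_igN).
have := ltn_pmod i p_gt0; have := ltn_pmod (i + g) p_gt0.
move=> lt_ig_p lt_i_p; apply: (has_period_eqmod g_gt0 fg); try lia.
by rewrite !modn_dvdm ?dvdn_gcdl // modnDr.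
Qed.

Lemma period_break_excludes_period (T : eqType) (f : nat -> T) p q N :
  0 < p -> 0 < q -> p <= N -> q <= N -> p + q <= N + gcdn p q ->
  period_breaks_at f q N -> ~ has_period f p N.+1.
Proof.
move=> p_gt0 q_gt0 le_pN le_qN bound [fq break] fp; move/negP: break; apply.
have -> : f N = f (N - p) by rewrite (fp (N - p)) subnK //; lia.
have g_gt0 : 0 < gcdn p q by rewrite gcdn_gt0 p_gt0.
have fg := fine_wilf p_gt0 q_gt0 bound (has_period_le (leqnSn N) fp) fq.
by apply/eqP/(has_period_eqmod g_gt0 fg); [lia | lia | apply: eqmod_gcd_shift; lia].
Qed.

Lemma size_rep (a : seq bool) q : size (rep a q) = q * size a.
Proof. by elim: q => //= q IH; rewrite size_cat IH mulSn. Qed.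

Lemma nth_rep (a : seq bool) q i : i < q * size a ->
  nth false (rep a q) i = nth false a (i %% size a).
Proof.
elim: q i => [|q IH] i lt_i; first by lia.
rewrite /= nth_cat; have [lt_ia | le_ai] := ltnP i (size a); first by rewrite modn_small.
rewrite IH; last by lia.
by rewrite -{2}(subnK le_ai) modnDr.
Qed.

Lemma nth_rotr_head (T : Type) (x0 : T) (s : seq T) k p : k <= size s -> p < k ->
  nth x0 (rotr k s) p = nth x0 s (size s - k + p).
Proof.
move=> le_k lt_p; rewrite /rotr /rot nth_cat size_drop ifT ?nth_drop //; lia.
Qed.

Lemma nth_rotr_tail (T : Type) (x0 : T) (s : seq T) k j : k <= size s -> j < size s - k ->
  nth x0 (rotr k s) (k + j) = nth x0 s j.
Proof.
move=> le_k lt_j; rewrite /rotr /rot nth_cat size_drop ifF ?nth_take; try lia.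
by congr nth; lia.
Qed.

Lemma periodic_take_of_period (s : seq bool) p d : 0 < p -> p < d -> p %| d -> d <= size s ->
  has_period (nth false s) p d -> periodic (take d s).
Proof.
move=> p_gt0 lt_pd p_d le_d sp; rewrite /periodic size_takel //.
exists p; split=> //; rewrite (take_takel _ (ltnW lt_pd)).
have size_p : size (take p s) = p by rewrite size_takel //; lia.
apply: (@eq_from_nth _ false); first by rewrite size_rep size_p divnK // size_takel.
move=> i; rewrite size_takel // => lt_id.
rewrite nth_rep size_p ?divnK // !nth_take ?ltn_pmod //.
exact: has_period_modE p_gt0 sp lt_id.
Qed.

Lemma inB_period_breaks n c d s : inB n c d s -> period_breaks_at (nth false s) d (c + d - 1).
Proof.
case=> [[size_s le_c d_gt0 le_d le_d2] [_ _ prefixE]].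
set q := (c + d - 1) %/ d in prefixE; set r := _ - q * d in prefixE.
have rE : r = (c + d - 1) %% d by rewrite /r /q {1}(divn_eq (c + d - 1) d) addKn.
have lt_rd : r < d by rewrite rE ltn_pmod.
have qdr : q * d + r = c + d - 1 by rewrite rE /q -divn_eq.
have size_d : size (take d s) = d by rewrite size_takel //; lia.
have size_r : size (take r s) = r by rewrite size_takel //; lia.
have nthE i : i < c + d ->
    nth false s i = nth false (rep (take d s) q ++ take r s ++ [:: ~~ nth false s r]) i.
  by move=> lt_i; rewrite -prefixE nth_take.
have size_rep_d : size (rep (take d s) q) = q * d by rewrite size_rep size_d.
have modE i : i < c + d - 1 -> nth false s i = nth false s (i %% d).
  move=> lt_i; rewrite nthE; last by lia.
  rewrite nth_cat size_rep_d.
  have [lt_iq | le_qi] := ltnP i (q * d).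
    by rewrite nth_rep size_d // nth_take ?ltn_pmod.
  rewrite nth_cat size_r ifT; last by lia.
  rewrite nth_take; last by lia.
  by rewrite -{2}(subnKC le_qi) modnMDl modn_small; lia.
have lastE : nth false s (c + d - 1) = ~~ nth false s r.
  rewrite nthE; last by lia.
  rewrite nth_cat size_rep_d ifF; last by lia.
  rewrite nth_cat size_r ifF; last by lia.
  by rewrite -qdr addKn subnn.
split; first exact: has_period_of_modE.
rewrite lastE (modE (c + d - 1 - d)); last by lia.
have -> : (c + d - 1 - d) %% d = r.
  by rewrite rE -[in RHS](subnK (_ : d <= c + d - 1)) ?modnDr //; lia.
by case: (nth false s r).
Qed.

Section RotationInB.

Variables (T : eqType) (f fa : nat -> T) (c d d' k : nat).

Hypotheses (d_gt0 : 0 < d) (d'_gt0 : 0 < d') (le_d'd : d' <= d) (lt_dc : d < c).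
Hypotheses (le_2d : 2 * d <= c.+1) (lt_k : k < c + d).
Hypothesis f_breaks : period_breaks_at f d (c + d - 1).
Hypothesis fa_breaks : period_breaks_at fa d' (c + d' - 1).
Hypothesis fa_head : forall p, p < k -> fa p = f (c + d - k + p).
Hypothesis fa_tail : forall j, j < c + d - k -> fa (k + j) = f j.
Hypothesis f_primitive : forall g, 0 < g -> g < d -> g %| d -> ~ has_period f g d.

Lemma gcd_periods_gt0 : 0 < gcdn d d'.
Proof. by rewrite gcdn_gt0 d_gt0. Qed.

Lemma gcd_periods_le : gcdn d d' <= d'.
Proof. exact: dvdn_leq d'_gt0 (dvdn_gcdr d d'). Qed.

Lemma periods_lt : d + d' < c + gcdn d d'.
Proof.
have := gcd_periods_gt0; have [lt_d'd | ->] : d' < d \/ d' = d by lia.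
  by lia.
by rewrite gcdnn; lia.
Qed.

Lemma window_contra m : m + (c + d') < c + d ->
  (forall p, p < c + d' -> fa p = f (m + p)) -> False.
Proof.
move=> lt_m faE; have bound := periods_lt.
apply: (period_break_excludes_period d_gt0 d'_gt0 _ _ _ fa_breaks); try lia.
have -> : (c + d' - 1).+1 = c + d' by lia.
apply: (has_period_ext (f := fun i => f (m + i))) => [i lt_i|]; first by rewrite faE.
by apply/has_period_shift/(has_period_le _ f_breaks.1); lia.
Qed.

Lemma rotation0_period : k = 0 -> d' = d.
Proof.
move=> k0; apply/eqP; rewrite eqn_leq le_d'd leqNgt; apply/negP => lt_d'd.
apply: (window_contra (m := 0)) => [|p lt_p]; first by lia.
by have := fa_tail (j := p); rewrite k0; apply; lia.
Qed.

Lemma rotation_le_window : k <= c + d'.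
Proof.
rewrite leqNgt; apply/negP => lt_win.
by apply: (window_contra (m := c + d - k)) => [|p lt_p]; [lia | apply: fa_head; lia].
Qed.

Lemma rotation_neq_window : k != c + d'.
Proof.
apply/eqP => k_eq; have lt_d'd : d' < d by lia.
have bound := periods_lt; have g_gt0 := gcd_periods_gt0; have le_gd' := gcd_periods_le.
set g := gcdn d d' in bound g_gt0 le_gd' *.
have fa_d : has_period fa d (c + d' - 1).
  apply: (has_period_ext (f := fun i => f (c + d - k + i))) => [i lt_i|].
    by rewrite fa_head //; lia.
  by apply/has_period_shift/(has_period_le _ f_breaks.1); lia.
have fa_g : has_period fa g (c + d' - 1) by apply: fine_wilf fa_d fa_breaks.1; lia.
apply: (f_primitive g_gt0); [lia | exact: dvdn_gcdl |].
apply: (has_period_ext (f := fun i => fa (d' + i))) => [i lt_i|].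
  by rewrite fa_head; [rewrite (proj1 f_breaks i); [congr f|]|]; lia.
by apply/has_period_shift/(has_period_le _ fa_g); lia.
Qed.

Lemma rotation_gt_period : 0 < k -> d' < k.
Proof.
move=> k_gt0; rewrite ltnNge; apply/negP => le_kd'.
have bound := periods_lt; set M := c + d' - 1 - k.
have f_d' : period_breaks_at f d' M.
  split=> [j lt_j|].
    rewrite -(fa_tail (j := j)); last by lia.
    rewrite -(fa_tail (j := j + d')); last by lia.
    by rewrite addnA; apply: fa_breaks.1; lia.
  rewrite -(fa_tail (j := M)); last by lia.
  rewrite -(fa_tail (j := M - d')); last by lia.
  by have [_] := fa_breaks; congr (fa _ != fa _); lia.
apply: (period_break_excludes_period d_gt0 d'_gt0 _ _ _ f_d'); try lia.
by apply: has_period_le f_breaks.1; lia.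
Qed.

Lemma head_long_contra : d' < k -> k < c + d' -> d + d' <= k - 1 + gcdn d d' -> False.
Proof.
move=> lt_d'k lt_k_win bound; have le_gd' := gcd_periods_le.
have fa_d : period_breaks_at fa d (k - 1).
  split=> [|]; last first.
    rewrite !fa_head; try lia.
    by have [_] := f_breaks; congr (f _ != f _); lia.
  apply: (has_period_ext (f := fun i => f (c + d - k + i))) => [i lt_i|].
    by rewrite fa_head //; lia.
  by apply/has_period_shift/(has_period_le _ f_breaks.1); lia.
apply: (period_break_excludes_period d'_gt0 d_gt0 _ _ _ fa_d); try lia.
  by rewrite gcdnC; lia.
by apply: has_period_le fa_breaks.1; lia.
Qed.

(* The window before the defect is too short for Fine-Wilf: chase the value
   f (c + d - 1) along d- and d'-steps instead. *)
Lemma head_short_contra : d' < d -> d' < k -> k < d + d' -> False.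
Proof.
move=> lt_d'd lt_d'k lt_k_dd'; have [f_d f_break] := f_breaks; have [fa_d' _] := fa_breaks.
move/negP: f_break; apply; apply/eqP.
have f_last : f (c + d - 1) = fa (k - 1) by rewrite fa_head; [congr f|]; lia.
have [lt_dd'c | | eq_dd'c] := ltngtP (d + d') c; last 2 first.
- by lia.
- rewrite f_last fa_d'; last by lia.
  have -> : k - 1 + d' = k + (d' - 1) by lia.
  rewrite fa_tail; last by lia.
  by rewrite f_d; [congr f; lia | lia].
set j := c - d - d' - 1.
have -> : f (c + d - 1) = f j.
  rewrite f_last; have -> : k - 1 = k - 1 - d' + d' by lia.
  rewrite -fa_d'; last by lia.
  rewrite fa_head; last by lia.
  have -> : c + d - k + (k - 1 - d') = j + d + d by lia.
  rewrite -(f_d (j + d)); last by lia.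
  by rewrite -(f_d j) //; lia.
rewrite -(fa_tail (j := j)); last by lia.
rewrite fa_d'; last by lia.
rewrite -addnA fa_tail; last by lia.
by rewrite f_d; [congr f; lia | lia].
Qed.

Lemma rotation_trivial : k = 0 /\ d' = d.
Proof.
have [k0 | k_gt0] := posnP k; first by split; last exact: rotation0_period.
exfalso; have g_gt0 := gcd_periods_gt0; have le_gd' := gcd_periods_le.
have le_k_win := rotation_le_window; have ne_k_win := rotation_neq_window.
have lt_d'k := rotation_gt_period k_gt0.
have [le_bound | lt_bound] := leqP (d + d') (k - 1 + gcdn d d').
  by apply: head_long_contra; lia.
have lt_d'd : d' < d.
  rewrite ltn_neqAle le_d'd andbT; apply/eqP => eq_d'd.
  by move: lt_bound; rewrite eq_d'd gcdnn; lia.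
by apply: head_short_contra; lia.
Qed.

End RotationInB.

Lemma ceil_div_bound n c : ceil_div (2 * n - 1) 3 <= c -> 2 * n <= 3 * c + 1.
Proof. by rewrite /ceil_div; lia. Qed.

Lemma add_eq0 d (a : seq bool) : 0 < size a ->
  nth false a (size a - 1) != nth false a (d - 1) -> add d a = 0.
Proof. by rewrite /add; case: (size a) => //= m _; rewrite mod0n !subn0 => ->. Qed.

Lemma inR_of_inB n c s : ceil_div (2 * n - 1) 3 <= c -> inB n c (n - c) s -> inR n c s.
Proof.
move=> /ceil_div_bound le_n sB; exists (n - c); split=> // a d' [[k lt_k ->] _] aB.
have [[size_s le_c d_gt0 le_d _] [_ primitive _]] := sB.
have [[size_a _ d'_gt0 le_d' _] _] := aB.
have [s_breaks a_breaks] := (inB_period_breaks sB, inB_period_breaks aB).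
have [lt_dc | le_cd] := ltnP (n - c) c; last first.
  (* Here n = 2 and c = d' = 1, so add d' a = 0. *)
  rewrite add_eq0 // size_a; try lia.
  by have [_] := a_breaks; congr (nth _ _ _ != nth _ _ _); lia.
have [-> ->] : k = 0 /\ d' = n - c.
  apply: (rotation_trivial d_gt0 d'_gt0 _ lt_dc _ _ s_breaks a_breaks); try lia.
  - move=> p lt_p; rewrite nth_rotr_head; try lia.
    by rewrite size_s; congr nth; lia.
  - by move=> j lt_j; rewrite nth_rotr_tail //; lia.
  - move=> g g_gt0 lt_gd g_d sg; apply: primitive.
    by apply: (periodic_take_of_period g_gt0 lt_gd g_d) => //; lia.
by rewrite /Rshift /rotr subn0 -size_s rot_size.
Qed.

Lemma tail_not_power n c s : ceil_div (2 * n - 1) 3 <= c -> inB n c (n - c) s ->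
  ~ exists b l, [/\ 1 < b, b %| c, b < c, aperiodic (take b s) &
                   subseqij s (n - c) n = rep (take b s) l].
Proof.
move=> /ceil_div_bound le_n sB [b [l [b_gt1 b_c lt_bc _ tailE]]].
have [[size_s _ d_gt0 le_d _] _] := sB.
have [f_d f_break] := inB_period_breaks sB.
set d := n - c in d_gt0 le_d f_d f_break tailE; set f := nth false s in f_d f_break.
have size_b : size (take b s) = b by rewrite size_takel //; lia.
have size_tail : size (subseqij s d n) = c.
  by rewrite /subseqij size_takel ?size_drop; lia.
have c_lb : c = l * b by rewrite -size_tail tailE size_rep size_b.
have tail_mod i : i < c -> f (d + i) = f (i %% b).
  move=> lt_i; have -> : f (d + i) = nth false (subseqij s d n) i.
    by rewrite /subseqij nth_take ?nth_drop //; lia.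
  rewrite tailE nth_rep size_b; last by lia.
  by rewrite nth_take // ltn_pmod; lia.
have l_gt1 : 1 < l.
  rewrite ltnNge; apply/negP => le_l1.
  have : l * b <= 1 * b by rewrite leq_mul2r le_l1 orbT.
  lia.
have le_bdc : b + d <= c.
  have [l2 | lt2l] : l = 2 \/ 2 < l by lia.
    by lia.
  have : 3 * b <= l * b by rewrite leq_mul2r lt2l orbT.
  lia.
have f_b : has_period f b (c - 1).
  apply: has_period_of_modE => [|i lt_i]; first lia.
  rewrite -tail_mod; last by lia.
  by rewrite addnC f_d; lia.
have g_gt0 : 0 < gcdn b d by rewrite gcdn_gt0; lia.
have f_g : has_period f (gcdn b d) (c - 1).
  by apply: fine_wilf f_b (has_period_le _ f_d); lia.
move/negP: f_break; apply; apply/eqP.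
have -> : c + d - 1 = d + (c - 1) by lia.
rewrite tail_mod; last by lia.
have -> : (c - 1) %% b = b - 1.
  by rewrite (eqmod_pred (_ : 0 < c) (_ : 0 < b)) ?dvdnn ?modn_small //; lia.
have -> : d + (c - 1) - d = c - d - 1 + d by lia.
rewrite -f_d; last by lia.
apply: (has_period_eqmod g_gt0 f_g); try lia.
apply: eqmod_pred; [lia | lia | exact: dvdn_gcdl |].
by rewrite dvdn_sub ?dvdn_gcdr // (dvdn_trans (dvdn_gcdl b d)).
Qed.

Theorem proposition1 (n c : nat) (s : seq bool) :
  ceil_div (2 * n - 1) 3 <= c ->
  inB n c (n - c) s ->
  inR n c s <->
  ~ (exists b l : nat,
       [/\ 1 < b, b %| c, b < c, aperiodic (take b s) &
           subseqij s (n - c) n = rep (take b s) l]).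
Proof.
move=> le_c sB; split=> _; [exact: tail_not_power | exact: inR_of_inB].
Qed.
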